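(* Let $\Sigma$ be an alphabet and let $\mathcal P=(n,\Gamma,I,M,P,p_0,l)$ be a $\mathbb B\langle\Sigma\cup\{\epsilon\}\rangle$-$\omega$-pushdown automaton over $(\mathbb B\langle\langle\Sigma^*\rangle\rangle,\mathbb B\langle\langle\Sigma^\omega\rangle\rangle)$, with $l\in\{0,\dots,n\}$. Let $\sigma_{x_0}=I(M^* )_{p_0,\epsilon}P$ and $\tau_{z_0}=I(M^{\omega,l})_{p_0}$ be the $x_0$- and $z_0$-components of the solution of order $l$, regarded (via the isomorphism $\mathbb B\langle\langle\Sigma^*\rangle\rangle\times\mathbb B\langle\langle\Sigma^\omega\rangle\rangle\cong 2^{\Sigma^*}\times2^{\Sigma^\omega}$) as a language of finite words and a language of infinite words. Then $$L(G_l)=\sigma_{x_0}\cup\tau_{z_0}.$$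
   Context: $\mathbb B=(\{0,1\},\vee,\wedge,{}^*,0,1)$ with $0^*=1^*=1$ is a complete star-omega semiring, and $(\mathbb B\langle\langle\Sigma^*\rangle\rangle,\mathbb B\langle\langle\Sigma^\omega\rangle\rangle)$ (power series over finite/infinite words, identified with languages) is a complete semiring-semimodule pair (infinite sums = unions, infinite products = concatenations). For a series $s$ and word $a$, $(s,a)$ is the coefficient of $a$ in $s$; $\mathbb B\langle\Sigma\cup\{\epsilon\}\rangle$ is the set of series with support in $\Sigma\cup\{\epsilon\}$. A pushdown transition matrix $M$ ($\Gamma^*\times\Gamma^*$ matrix with $n\times n$ blocks over $\mathbb B\langle\Sigma\cup\{\epsilon\}\rangle$) satisfies (i) for each $p\in\Gamma$ only finitely many blocks $M_{p,\pi}$ are nonzero, and (ii) $M_{\pi_1,\pi_2}=M_{p,\pi}$ if $\pi_1=p\pi'$, $\pi_2=\pi\pi'$ for some $p\in\Gamma$, $\pi,\pi'\in\Gamma^*$, and $0$ otherwise. The automaton consists of states $1,\dots,n$, pushdown alphabet $\Gamma$, such an $M$, $I\in(\mathbb B\langle\Sigma\cup\{\epsilon\}\rangle)^{1\times n}$, $P\in(\mathbb B\langle\Sigma\cup\{\epsilon\}\rangle)^{n\times 1}$, $p_0\in\Gamma$, $l$. $M^*=\sum_{m\ge0}M^m$ with blocks $(M^* )_{\pi,\pi'}$; with $P_l=\{(j_1,j_2,\dots)\in\{1,\dots,n\}^\omega\mid j_t\le l\text{ for infinitely many }t\}$, $((M^{\omega,l})_\pi)_i=\sum_{\pi_1,\pi_2,\ldots\in\Gamma^*}\sum_{(j_1,j_2,\ldots)\in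 P_l}(M_{\pi,\pi_1})_{i,j_1}(M_{\pi_1,\pi_2})_{j_1,j_2}\cdots$. The mixed context-free grammar $G_l=(X,Z,\Sigma,P_X,P_Z,x_0,z_0,l)$ has variables $X=\{x_0\}\cup\{[i,p,j]\mid 1\le i,j\le n,\ p\in\Gamma\}$ (for finite derivations), $Z=\{z_0\}\cup\{[i,p]\mid1\le i\le n,\ p\in\Gamma\}$ (for infinite derivations), and productions: $P_X$: $x_0\to a_1[m_1,p_0,m_2]a_2$ whenever $(I_{m_1},a_1)\ne0$, $(P_{m_2},a_2)\ne0$, $a_1,a_2\in\Sigma\cup\{\epsilon\}$; and $[i,p,j]\to a[m_1,p_1,m_2][m_2,p_2,m_3]\cdots[m_k,p_k,j]$ whenever $k\ge0$, $p_1,\dots,p_k\in\Gamma$, $1\le m_1,\dots,m_k\le n$, $a\in\Sigma\cup\{\epsilon\}$, $((M_{p,p_1\dots p_k})_{i,m_1},a)\ne0$ (for $k=0$ the production is $[i,p,j]\to a$ with $((M_{p,\epsilon})_{i,j},a)\ne0$). $P_Z$: $z_0\to a[m,p_0]$ whenever $(I_m,a)\ne0$, $a\in\Sigma\cup\{\epsilon\}$; and $[i,p]\to a[m_1,p_1,m_2]\cdots[m_{j-1},p_{j-1},m_j][m_j,p_j]$ whenever $k\ge1$, $1\le j\le k$, $p_1,\dots,p_k\in\Gamma$, $1\le m_1,\dots,m_j\le n$, $a\in\Sigma\cup\{\epsilon\}$, $((M_{p,p_1\dots p_k})_{i,m_1},a)\ne0$. Finite leftmost derivations $\Rightarrow_L^*$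 with $P_X$ are as usual. An infinite derivation of $w\in\Sigma^\omega$ is a sequence $z_0\Rightarrow\alpha_0[i_0,q_0]\Rightarrow_L^*w_0[i_0,q_0]\Rightarrow w_0\alpha_1[i_1,q_1]\Rightarrow_L^*w_0w_1[i_1,q_1]\Rightarrow\cdots\Rightarrow_L^* w_0\cdots w_m[i_m,q_m]\Rightarrow w_0\cdots w_m\alpha_{m+1}[i_{m+1},q_{m+1}]\Rightarrow_L^*\cdots$ where $z_0\to\alpha_0[i_0,q_0]$ and $[i_m,q_m]\to\alpha_{m+1}[i_{m+1},q_{m+1}]$ are productions in $P_Z$, each $\alpha_m\Rightarrow_L^* w_m\in\Sigma^*$ is a finite leftmost derivation with $P_X$, and $w=w_0w_1w_2\cdots$. It is a derivation $z_0\Rightarrow_L^{\omega,l}w$ if, letting $i_m^1,\dots,i_m^{t_m}$ be the first components $i$ of the triple variables $[i,p,j]$ rewritten (in order) in $\alpha_m\Rightarrow_L^*w_m$, the sequence $i_0,i_1^1,\dots,i_1^{t_1},i_1,i_2^1,\dots,i_2^{t_2},i_2,\dots$ lies in $P_l$. Then $L(G_l)=\{w\in\Sigma^*\mid x_0\Rightarrow_L^*w\}\cup\{w\in\Sigma^\omega\mid z_0\Rightarrow_L^{\omega,l}w\}$. *)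

(* Languages are Prop-valued predicates:
   finite words = seq Sigma, infinite words = nat -> Sigma.
   States 1..n of the paper are represented by 'I_n (0-based): paper state
   j+1 <-> ordinal j; hence "j <= l" becomes "val j < l". *)
From mathcomp Require Import all_boot.
Set Implicit Arguments. Unset Strict Implicit. Unset Printing Implicit Defensive.

Definition optw {S : Type} (a : option S) : seq S :=
  if a is Some x then [:: x] else [::].

Fixpoint prepend {S : Type} (u : seq S) (w : nat -> S) : nat -> S :=
  match u with
  | [::] => w
  | x :: u' => fun k => if k is k'.+1 then prepend u' w k' else x
  end.

(* w = W 0 W 1 W 2 ... (infinite concatenation of finite words, giving an
   omega-word: every finite prefix agrees and the lengths are unbounded) *)
Definition is_inf_concat {S : Type} (W : nat -> seq S) (w : nat -> S) : Prop :=
  (forall m k, k < size (flatten (mkseq W m.+1)) ->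
     w k = nth (w k) (flatten (mkseq W m.+1)) k) /\
  (forall N, exists m, N <= size (flatten (mkseq W m.+1))).

Definition in_Pl (n l : nat) (js : nat -> 'I_n) : Prop :=
  forall N, exists t, N <= t /\ val (js t) < l.

(* flattening of an infinite sequence of (nonempty) finite blocks into a
   stream; the fuel k.+1 suffices when all blocks are nonempty. *)
Fixpoint flat_aux {T : Type} (x0 : T) (b : nat -> seq T) (fuel m k : nat) : T :=
  match fuel with
  | 0 => x0
  | f.+1 => if k < size (b m) then nth x0 (b m) k
            else flat_aux x0 b f m.+1 (k - size (b m))
  end.
Definition flat {T : Type} (x0 : T) (b : nat -> seq T) (k : nat) : T :=
  flat_aux x0 b k.+1 0 k.

Section PDA.
Variables (Sigma Gamma : finType) (n : nat).
(* blocks M_{p,pi} of the pushdown transition matrix; entries are elements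
   of B<Sigma u {eps}>, i.e. subsets of option Sigma (None = epsilon) *)
Variable Mb : Gamma -> seq Gamma -> 'I_n -> 'I_n -> option Sigma -> bool.
Variables (I P : 'I_n -> option Sigma -> bool) (p0 : Gamma) (l : nat).

Definition pd_finite : Prop :=
  forall p, exists s : seq (seq Gamma),
    forall pi, pi \notin s -> forall i j a, ~~ Mb p pi i j a.

Definition Mfull (pi1 pi2 : seq Gamma) (i j : 'I_n) (a : option Sigma) : Prop :=
  exists p pi pi', pi1 = p :: pi' /\ pi2 = pi ++ pi' /\ Mb p pi i j a.

Inductive Mstar : seq Gamma -> 'I_n -> seq Gamma -> 'I_n -> seq Sigma -> Prop :=
| Mstar0 pi i : Mstar pi i pi i [::]
| MstarS pi i pi1 k pi' j a w :
    Mfull pi pi1 i k a -> Mstar pi1 k pi' j w -> Mstar pi i pi' j (optw a ++ w).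

Definition Momega (pi : seq Gamma) (i : 'I_n) (w : nat -> Sigma) : Prop :=
  exists (pis : nat -> seq Gamma) (js : nat -> 'I_n) (as_ : nat -> option Sigma),
    pis 0 = pi /\ js 0 = i /\
    (forall t, Mfull (pis t) (pis t.+1) (js t) (js t.+1) (as_ t)) /\
    in_Pl l (fun t => js t.+1) /\
    is_inf_concat (fun t => optw (as_ t)) w.

Definition sigma_x0 (w : seq Sigma) : Prop :=
  exists m1 m2 a1 u a2, I m1 a1 /\ Mstar [:: p0] m1 [::] m2 u /\ P m2 a2 /\
    w = optw a1 ++ u ++ optw a2.

Definition tau_z0 (w : nat -> Sigma) : Prop :=
  exists m a w', I m a /\ Momega [:: p0] m w' /\ w = prepend (optw a) w'.

Inductive xsym : Type :=
| XT of Sigma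
| X0
| XV of 'I_n & Gamma & 'I_n.

Definition topt (a : option Sigma) : seq xsym := map XT (optw a).

(* chain [m1,p1,m2][m2,p2,m3]...[mk,pk,j] for ms = m1..mk, ps = p1..pk *)
Fixpoint chain (ms : seq 'I_n) (ps : seq Gamma) (j : 'I_n) : seq xsym :=
  match ms, ps with
  | m :: ms', p :: ps' => XV m p (head j ms') :: chain ms' ps' j
  | _, _ => [::]
  end.

(* For [i,p,j]: ps = p1..pk, ms = m1..mk (k >= 0); the
   condition is on the (i, m1) entry of M_{p,p1..pk}, with m1 = head j ms
   (for k = 0 this is the (i,j) entry and the right side is just a). *)
Definition prodX (A : xsym) (g : seq xsym) : Prop :=
  match A with
  | XT _ => False
  | X0 => exists a1 m1 m2 a2, I m1 a1 /\ P m2 a2 /\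
            g = topt a1 ++ XV m1 p0 m2 :: topt a2
  | XV i p j => exists a (ps : seq Gamma) (ms : seq 'I_n),
            size ms = size ps /\ Mb p ps i (head j ms) a /\
            g = topt a ++ chain ms ps j
  end.

Inductive lstep : seq xsym -> xsym -> seq xsym -> Prop :=
| LStep (u : seq Sigma) A g beta :
    prodX A g -> lstep (map XT u ++ A :: beta) A (map XT u ++ g ++ beta).

Inductive lderiv : seq xsym -> seq xsym -> seq xsym -> Prop :=
| LDeriv0 s : lderiv s s [::]
| LDerivS s A s' s'' tr : lstep s A s' -> lderiv s' s'' tr -> lderiv s s'' (A :: tr).

Definition firsts (tr : seq xsym) : seq 'I_n :=
  pmap (fun A => if A is XV i _ _ then Some i else None) tr.

(* productions P_Z, split as  lhs -> alpha [i',q']  *)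
Definition prodZ0 (alpha : seq xsym) (iq : 'I_n * Gamma) : Prop :=
  exists a, I iq.1 a /\ iq.2 = p0 /\ alpha = topt a.

(* [i,p] -> a [m1,p1,m2]...[m_{j-1},p_{j-1},m_j][m_j,p_j] with
   ps = p1..pk = ps1 ++ p_j :: ps2, ms1 = m1..m_{j-1}, m_j = i', m1 = head i' ms1 *)
Definition prodZ (ip : 'I_n * Gamma) (alpha : seq xsym) (iq : 'I_n * Gamma) : Prop :=
  exists a (ps1 ps2 : seq Gamma) (ms1 : seq 'I_n),
    size ms1 = size ps1 /\
    Mb ip.2 (ps1 ++ iq.2 :: ps2) ip.1 (head iq.1 ms1) a /\
    alpha = topt a ++ chain ms1 ps1 iq.1.

Definition LG_fin (w : seq Sigma) : Prop := exists tr, lderiv [:: X0] (map XT w) tr.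

Definition LG_omega (w : nat -> Sigma) : Prop :=
  exists (iq : nat -> 'I_n * Gamma) (alpha : nat -> seq xsym)
         (W : nat -> seq Sigma) (tr : nat -> seq xsym),
    prodZ0 (alpha 0) (iq 0) /\
    (forall m, prodZ (iq m) (alpha m.+1) (iq m.+1)) /\
    (forall m, lderiv (alpha m) (map XT (W m)) (tr m)) /\
    is_inf_concat W w /\
    (* the sequence i_0, i_1^1..i_1^{t_1}, i_1, i_2^1.., i_2, ... lies in P_l *)
    in_Pl l (flat (iq 0).1
      (fun m => if m is m'.+1 then firsts (tr m) ++ [:: (iq m).1]
                else [:: (iq 0).1])).

End PDA.

From mathcomp Require Import all_boot zify.
From Stdlib Require Import ClassicalEpsilon FunctionalExtensionality.
From Stdlib Require Wf_nat.
Set Implicit Arguments. Unset Strict Implicit. Unset Printing Implicit Defensive.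

(* A triple variable [i,p,j] derives exactly the words read by the computations
   of M from state i with pushdown p to state j with empty pushdown, and the
   first components of the triples rewritten along a derivation are the states
   in which the transitions of the computation are taken; this gives the finite
   part.  An infinite derivation chains Z-productions, each followed by a finite
   derivation of its triples.  A Z-production replaces the top symbol and leaves
   a part of the pushdown that is never popped again, so the pieces glue into
   one infinite computation.  Conversely, an infinite computation is cut at the
   (infinitely many) times after which the pushdown never gets lower, and each
   segment between two cuts is a Z-production followed by a finite derivation.
   In both directions the sequences of states coincide, which transfers the
   acceptance condition P_l. *)

Local Notation pcat b m := (flatten (mkseq b m)).

Section InfiniteConcatenation.
Variable T : Type.
Implicit Types (b c : nat -> seq T) (x : nat -> T).

Lemma pcatS b m : pcat b m.+1 = pcat b m ++ b m.
Proof. by rewrite mkseqS -cats1 flatten_cat /= cats0. Qed.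

Lemma pcatSl b m : pcat b m.+1 = b 0 ++ pcat (fun k => b k.+1) m.
Proof. by rewrite /mkseq /= -[1]addn0 iotaDl -map_comp. Qed.

Lemma size_pcat_ge b m : (forall k, 0 < size (b k)) -> m <= size (pcat b m).
Proof.
move=> b_gt0; elim: m => // m IHm.
by rewrite pcatS size_cat; have := b_gt0 m; lia.
Qed.

Lemma is_inf_concatI b x :
  (forall m k, k < size (pcat b m) -> x k = nth (x k) (pcat b m) k) ->
  (forall N, exists m, N <= size (pcat b m)) -> is_inf_concat b x.
Proof.
move=> xE unbounded; split=> [m k|N]; first exact: xE.
have [m Nm] := unbounded N; exists m.
by rewrite pcatS size_cat; exact: leq_trans Nm (leq_addr _ _).
Qed.

Lemma is_inf_concat_nth b x m k : is_inf_concat b x ->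
  k < size (pcat b m) -> x k = nth (x k) (pcat b m) k.
Proof. by case: m => [//|m] [xE _]; exact: xE. Qed.

Lemma is_inf_concat_unbounded b x N : is_inf_concat b x ->
  exists m, N <= size (pcat b m).
Proof. by move=> [_ unbounded]; have [m ?] := unbounded N; exists m.+1. Qed.

Lemma is_inf_concat_prefix b x m : is_inf_concat b x ->
  mkseq x (size (pcat b m)) = pcat b m.
Proof.
move=> bx; apply: (@eq_from_nth _ (x 0)); rewrite size_mkseq // => k lt_k.
by rewrite nth_mkseq // (is_inf_concat_nth bx lt_k); exact: set_nth_default.
Qed.

Lemma is_inf_concat_unique b x y : is_inf_concat b x -> is_inf_concat b y -> x =1 y.
Proof.
move=> bx b_y k; have [m lt_k] := is_inf_concat_unbounded k.+1 bx.
rewrite (is_inf_concat_nth bx lt_k) (is_inf_concat_nth b_y lt_k).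
exact: set_nth_default.
Qed.

Lemma is_inf_concat_regroup b c x :
  (forall m, exists m' s, pcat c m' = pcat b m ++ s) ->
  (forall m, exists m' s, pcat b m' = pcat c m ++ s) ->
  is_inf_concat b x -> is_inf_concat c x.
Proof.
move=> cb bc bx; apply: is_inf_concatI => [m k lt_k|N].
- have [m' [s bE]] := bc m.
  have lt_k' : k < size (pcat b m') by rewrite bE size_cat ltn_addr.
  by rewrite {1}(is_inf_concat_nth bx lt_k') bE nth_cat lt_k.
- have [m Nm] := is_inf_concat_unbounded N bx; have [m' [s cE]] := cb m.
  by exists m'; rewrite cE size_cat; exact: leq_trans Nm (leq_addr _ _).
Qed.

Lemma is_inf_concat_seq1 x : is_inf_concat (fun t => [:: x t]) x.
Proof.
have pE m : pcat (fun t => [:: x t]) m = mkseq x m by rewrite /mkseq flatten_map1.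
apply: is_inf_concatI => [m k|N]; last by exists N; rewrite pE size_mkseq.
by rewrite pE size_mkseq => lt_k; rewrite nth_mkseq.
Qed.

Lemma flat_is_inf_concat (x0 : T) b : (forall m, 0 < size (b m)) ->
  is_inf_concat b (flat x0 b).
Proof.
move=> b_gt0.
have flat_auxE f m0 k N : k < f -> k < size (flatten (map b (iota m0 N))) ->
    flat_aux x0 b f m0 k = nth x0 (flatten (map b (iota m0 N))) k.
  elim: f m0 k N => [//|f IHf] m0 k [//|N] lt_kf /=; rewrite size_cat nth_cat /=.
  case: ifP => // ge_k lt_kN; apply: IHf; have := b_gt0 m0; lia.
apply: is_inf_concatI => [m k lt_k|N]; last by exists N; exact: size_pcat_ge.
rewrite /flat (flat_auxE _ _ _ m) //; exact: set_nth_default.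
Qed.

Lemma pcat_prefix b m m' : m <= m' -> exists s, pcat b m' = pcat b m ++ s.
Proof.
by move=> le_mm'; rewrite /mkseq -(subnKC le_mm') iotaD map_cat flatten_cat; eexists.
Qed.

Lemma is_inf_concat_group (B : nat -> nat) c w :
  B 0 = 0 -> (forall m, B m < B m.+1) ->
  is_inf_concat (fun m => flatten (map c (iota (B m) (B m.+1 - B m)))) w <->
  is_inf_concat c w.
Proof.
move=> B0 B_lt; set g := fun m => _.
have gE m : pcat g m = pcat c (B m).
  elim: m => [|m IHm]; first by rewrite B0.
  rewrite pcatS IHm /mkseq /g -flatten_cat -map_cat -iotaD subnKC //.
  exact: ltnW.
have le_B m : m <= B m by elim: m => // m IHm; exact: leq_ltn_trans IHm (B_lt m).
split; apply: is_inf_concat_regroup => m.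
- by exists (B m), [::]; rewrite gE cats0.
- by exists m; rewrite gE; apply: pcat_prefix.
- by exists m; rewrite gE; apply: pcat_prefix.
- by exists (B m), [::]; rewrite gE cats0.
Qed.

Lemma prepend_nth (u : seq T) w k :
  prepend u w k = if k < size u then nth (w 0) u k else w (k - size u).
Proof. by elim: u k => [|y u IHu] [|k] //=; rewrite ?subn0 // IHu ltnS subSS. Qed.

Lemma is_inf_concat_cons (u : seq T) b x : is_inf_concat b x ->
  is_inf_concat (fun m => if m is m'.+1 then b m' else u) (prepend u x).
Proof.
set c := fun m => _; have cE m : pcat c m.+1 = u ++ pcat b m by rewrite pcatSl.
move=> bx; apply: is_inf_concatI => [[//|m] k|N].
- rewrite cE size_cat prepend_nth nth_cat => lt_k; case: ifP => lt_ku.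
    exact: set_nth_default.
  apply: (is_inf_concat_nth bx); move: lt_k lt_ku; lia.
- have [m Nm] := is_inf_concat_unbounded N bx.
  by exists m.+1; rewrite cE size_cat; lia.
Qed.

Lemma is_inf_concat_behead b x : is_inf_concat b x ->
  is_inf_concat (fun m => b m.+1) (fun k => x (size (b 0) + k)).
Proof.
move=> bx; apply: is_inf_concatI => [m k lt_k|N].
- have lt_k' : size (b 0) + k < size (pcat b m.+1) by rewrite pcatSl size_cat ltn_add2l.
  rewrite (is_inf_concat_nth bx lt_k') pcatSl nth_cat ltnNge leq_addr /= addKn.
  exact: set_nth_default.
- have [m Nm] := is_inf_concat_unbounded (size (b 0) + N) bx.
  case: m Nm => [|m]; first by exists 0; move: Nm; rewrite /mkseq /=; lia.
  by rewrite pcatSl size_cat leq_add2l; exists m.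
Qed.

Lemma is_inf_concat_prependE b x : is_inf_concat b x ->
  x = prepend (b 0) (fun k => x (size (b 0) + k)).
Proof.
move=> bx; apply: functional_extensionality; apply: (is_inf_concat_unique bx).
have {1}-> : b = fun m => if m is m'.+1 then b m'.+1 else b 0.
  by apply: functional_extensionality => -[].
exact: is_inf_concat_cons (is_inf_concat_behead bx).
Qed.

Lemma is_inf_concat_succ (x0 : T) b x : (forall m, 0 < size (b m)) ->
  is_inf_concat b x -> forall k, exists m o, o < size (b m) /\
    x k = nth x0 (b m) o /\ x k.+1 = nth (nth x0 (b m.+1) 0) (b m) o.+1.
Proof.
move=> b_gt0 bx k; have [m1 lt_k] := is_inf_concat_unbounded k.+1 bx.
case: (@ex_minnP (fun m => k < size (pcat b m)) (ex_intro _ m1 lt_k)).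
move=> [//|m] lt_km min_m; have ge_km : size (pcat b m) <= k.
  by rewrite leqNgt; apply/negP => /min_m; rewrite ltnn.
move: lt_km; rewrite pcatS size_cat => lt_km.
exists m, (k - size (pcat b m)); split; first lia.
split.
  rewrite (is_inf_concat_nth bx (_ : k < size (pcat b m.+1))) ?pcatS ?size_cat //.
  by rewrite nth_cat ltnNge ge_km /=; apply: set_nth_default; lia.
have lt_k1 : k.+1 < size (pcat b m.+2) by rewrite !pcatS !size_cat; have := b_gt0 m.+1; lia.
rewrite (is_inf_concat_nth bx lt_k1) !pcatS -catA nth_cat ltnNge.
rewrite (_ : size (pcat b m) <= k.+1) /=; last lia.
rewrite -subSn // nth_cat; case: ltnP => [lt_o|ge_o]; first exact: set_nth_default.
rewrite [RHS]nth_default // (_ : _ - _ = 0); [exact: set_nth_default | lia].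
Qed.

Lemma is_inf_concat_heads (q : nat -> T) (F : nat -> seq T) x :
  is_inf_concat (fun m => q m :: F m.+1) x ->
  is_inf_concat (fun m => if m is _.+1 then F m ++ [:: q m] else [:: q 0]) x.
Proof.
set b := fun m => q m :: F m.+1; set c := fun m => _.
have cE m : pcat c m.+1 = pcat b m ++ [:: q m].
  by elim: m => // m IHm; rewrite pcatS IHm (pcatS b) -!catA.
apply: is_inf_concat_regroup => m.
- by exists m.+1, [:: q m]; rewrite cE.
- by case: m => [|m]; [exists 0, [::] | exists m.+1, (F m.+1); rewrite cE pcatS -catA].
Qed.

End InfiniteConcatenation.

Section InfiniteConcatenationMap.
Variables T S : Type.
Implicit Types (b : nat -> seq T) (x : nat -> T).

Lemma is_inf_concat_map (f : T -> S) b x : is_inf_concat b x ->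
  is_inf_concat (fun m => map f (b m)) (fun k => f (x k)).
Proof.
have pE m : pcat (fun m => map f (b m)) m = map f (pcat b m).
  by rewrite map_flatten /mkseq -map_comp.
move=> bx; apply: is_inf_concatI => [m k|N].
- rewrite pE size_map => lt_k.
  by rewrite (nth_map (x k)) // -(is_inf_concat_nth bx lt_k).
- by have [m Nm] := is_inf_concat_unbounded N bx; exists m; rewrite pE size_map.
Qed.

Lemma is_inf_concat_flatten (h : T -> seq S) b x w :
  (forall m, 0 < size (b m)) -> is_inf_concat b x ->
  is_inf_concat (fun m => flatten (map h (b m))) w ->
  is_inf_concat (fun k => h (x k)) w.
Proof.
move=> b_gt0 bx hbw; pose B m := size (pcat b m).
have BS m : B m.+1 = B m + size (b m) by rewrite /B pcatS size_cat.
have bE m : map x (iota (B m) (B m.+1 - B m)) = b m.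
  have := is_inf_concat_prefix m.+1 bx.
  rewrite -/(B m.+1) BS pcatS /mkseq iotaD map_cat => /(congr1 (drop (B m))).
  by rewrite !drop_size_cat ?size_map ?size_iota // addKn.
rewrite -(@is_inf_concat_group _ B) //; last by move=> m; rewrite BS -addn1 leq_add2l.
rewrite (_ : (fun m => _) = fun m => flatten (map h (b m))) //.
by apply: functional_extensionality => m; rewrite map_comp bE.
Qed.

End InfiniteConcatenationMap.

Section Linked.
Variables (T U : Type) (R : T -> U -> Prop) (f : T -> U).

Fixpoint linked (s : seq T) (u : U) : Prop :=
  if s is x :: s' then R x (head u (map f s')) /\ linked s' u else True.

Lemma linked_nth x0 s u o : linked s u -> o < size s ->
  R (nth x0 s o) (nth u (map f s) o.+1).
Proof.
elim: s o => [//|x s IHs] [|o] /= [Rx linked_s] lt_o //.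
exact: IHs.
Qed.

Lemma flat_linked x0 b x : (forall m, 0 < size (b m)) ->
  (forall m, linked (b m) (f (nth x0 (b m.+1) 0))) -> is_inf_concat b x ->
  forall k, R (x k) (f (x k.+1)).
Proof.
move=> b_gt0 b_linked bx k.
have [m [o [lt_o [-> ->]]]] := is_inf_concat_succ x0 b_gt0 bx k.
have fE y s i : f (nth y s i) = nth (f y) (map f s) i.
  case: (ltnP i (size s)) => [lt_i|le_i]; first by rewrite (nth_map y).
  by rewrite !nth_default ?size_map.
by rewrite fE; exact: linked_nth.
Qed.

End Linked.

Lemma ex_least_nat (Pr : nat -> Prop) :
  (exists k, Pr k) -> exists k, Pr k /\ forall k', Pr k' -> k <= k'.
Proof.
move=> exPr; have [k [[Prk min_k] _]] :=
  Wf_nat.dec_inh_nat_subset_has_unique_least_element _ (fun k => classic (Pr k)) exPr.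
by exists k; split=> // k' /min_k /leP.
Qed.

Lemma split_suffix (T : Type) (s : seq T) k : 0 < k <= size s ->
  exists s1 x s2, s = s1 ++ x :: s2 /\ size s2 = k.-1.
Proof.
move=> /andP[k_gt0 le_ks]; case e : (drop (size s - k) s) => [|x s2].
  by move: (congr1 size e); rewrite size_drop /=; lia.
exists (take (size s - k) s), x, s2; rewrite -e cat_take_drop; split=> //.
by move: (congr1 size e); rewrite size_drop /=; lia.
Qed.

Section Cuts.
Variable h : nat -> nat.

Definition stable t := forall s, t <= s -> h t <= h s.

(* The next cut is the first time after t at which the minimum of the later
   values of h is reached. *)
Lemma next_stable t : exists t', stable t ->
  [/\ t < t', stable t' & forall s, t < s < t' -> h t' < h s].
Proof.
case: (classic (stable t)) => [stable_t|]; last by exists 0.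
have [hmin [[s1 [lt_ts1 hE]] min_h]] :=
  ex_least_nat (ex_intro _ _ (ex_intro _ t.+1 (conj (ltnSn t) erefl)) :
    exists k, exists s, t < s /\ h s = k).
have [t' [[lt_tt' t'E] min_t']] :=
  ex_least_nat (ex_intro _ s1 (conj lt_ts1 hE) : exists s, t < s /\ h s = hmin).
exists t' => _; split=> // [s le_t's|s /andP[lt_ts lt_st']]; rewrite t'E.
  by apply: min_h; exists s; split=> //; exact: leq_trans le_t's.
rewrite ltn_neqAle min_h ?andbT; last by exists s.
by apply/eqP => hs; have := min_t' s (conj lt_ts (esym hs)); rewrite leqNgt lt_st'.
Qed.

Lemma stable_cuts t0 : stable t0 -> exists T : nat -> nat, T 0 = t0 /\ forall m,
  [/\ T m < T m.+1, h (T m) <= h (T m.+1)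
    & forall s, T m < s < T m.+1 -> h (T m.+1) < h s].
Proof.
move=> stable_t0; have [nx nxP] := choice _ next_stable.
have stable_iter m : stable (iter m nx t0).
  by elim: m => //= m IHm; have [] := nxP _ IHm.
exists (fun m => iter m nx t0); split=> // m.
have [lt_m _ between] := nxP _ (stable_iter m).
by split=> //; apply: stable_iter; exact: ltnW.
Qed.

End Cuts.

Section Pushdown.
Variables (Sigma Gamma : finType) (n : nat).
Variable Mb : Gamma -> seq Gamma -> 'I_n -> 'I_n -> option Sigma -> bool.
Variables (I P : 'I_n -> option Sigma -> bool) (p0 : Gamma) (l : nat).

Local Notation xsym := (xsym Sigma Gamma n).
Local Notation terms u := (map (@XT Sigma Gamma n) u).
Local Notation Mfull := (Mfull Mb).
Local Notation lderiv := (lderiv Mb I P p0).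
Local Notation chain := (chain Sigma).

Inductive run : seq Gamma -> 'I_n -> seq Gamma -> 'I_n -> seq Sigma -> seq 'I_n -> Prop :=
| run0 pi i : run pi i pi i [::] [::]
| runS pi i pi1 k pi' j a w qs :
    Mfull pi pi1 i k a -> run pi1 k pi' j w qs -> run pi i pi' j (optw a ++ w) (i :: qs).

Lemma Mfull_cons p pi pi2 i j a :
  Mfull (p :: pi) pi2 i j a <-> exists ps, pi2 = ps ++ pi /\ Mb p ps i j a.
Proof.
split; first by move=> [_ [ps [_ [[<- <-] [-> Mps]]]]]; exists ps.
by move=> [ps [-> Mps]]; exists p, ps, pi.
Qed.

Lemma Mfull_nil pi2 i j a : ~ Mfull [::] pi2 i j a.
Proof. by move=> [? [? [? []]]]. Qed.

Lemma run_nil i pi' j w qs : run [::] i pi' j w qs ->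
  [/\ pi' = [::], j = i, w = [::] & qs = [::]].
Proof.
move e : [::] => pi run_pi; case: run_pi e => // {}pi {}i pi1 k {}pi' {}j a {}w {}qs Mpi _ pi0.
by move: Mpi; rewrite -pi0 => /Mfull_nil.
Qed.

Lemma run_catr y x i x' j w qs : run x i x' j w qs -> run (x ++ y) i (x' ++ y) j w qs.
Proof.
elim=> [pi k|pi k pi1 k1 pi' j' a w' qs' Mpi _ IHrun]; first exact: run0.
apply: runS IHrun; move: Mpi => [p [ps [r [-> [-> Mps]]]]].
by exists p, ps, (r ++ y); rewrite catA.
Qed.

Lemma run_trans pi1 i pi2 j w qs pi3 k w' qs' :
  run pi1 i pi2 j w qs -> run pi2 j pi3 k w' qs' -> run pi1 i pi3 k (w ++ w') (qs ++ qs').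
Proof.
elim=> // pi i0 pi' k0 pi'' j0 a w0 qs0 Mpi _ IHrun run2.
by rewrite -catA; exact: runS Mpi (IHrun run2).
Qed.

Lemma run_split x y i j w qs : run (x ++ y) i [::] j w qs ->
  exists k w1 w2 q1 q2, [/\ run x i [::] k w1 q1, run y k [::] j w2 q2,
    w = w1 ++ w2 & qs = q1 ++ q2].
Proof.
move e : (x ++ y) => s; move e0 : [::] => z run_s.
elim: run_s x e e0 => [pi k|pi k pi1 k1 pi' j' a w' qs' Mpi run_pi1 IHrun] [|p x] //= e e0.
- by subst; exists k, [::], [::], [::], [::]; split=> //; exact: run0.
- by rewrite -e0 in e.
- subst; exists k, [::], (optw a ++ w'), [::], (k :: qs'); split=> //; first exact: run0.
  exact: runS Mpi run_pi1.
- subst; move: Mpi IHrun => /Mfull_cons [ps [-> Mps]] IHrun.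
  have [k2 [w1 [w2 [q1 [q2 [run1 run2 -> ->]]]]]] := IHrun (ps ++ x) (esym (catA _ _ _)) erefl.
  exists k2, (optw a ++ w1), w2, (k :: q1), q2; rewrite !catA; split=> //.
  by apply: runS run1; apply/Mfull_cons; exists ps.
Qed.

Lemma run_cons p pi i j w qs : run (p :: pi) i [::] j w qs ->
  exists ps k a w' qs', [/\ Mb p ps i k a, run (ps ++ pi) k [::] j w' qs',
    w = optw a ++ w' & qs = i :: qs'].
Proof.
move e : (p :: pi) => pi1; move e0 : [::] => z run1.
case: run1 e e0 => [? ? <- //|{}pi1 {}i pi2 k pi' {}j a w' qs' Mpi run2 e1 e2]; subst.
case/Mfull_cons: Mpi run2 => ps [-> Mps] run2.
by exists ps, k, a, w', qs'.
Qed.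

Lemma Mstar_run pi i pi' j w : Mstar Mb pi i pi' j w <-> exists qs, run pi i pi' j w qs.
Proof.
split.
- elim=> [pi0 i0|pi0 i0 pi1 k pi'0 j0 a w0 Mpi _ [qs run1]]; first by exists [::]; exact: run0.
  by exists (i0 :: qs); exact: runS Mpi run1.
- move=> [qs]; elim=> [pi0 i0|pi0 i0 pi1 k pi'0 j0 a w0 qs0 Mpi _ Mstar1]; first exact: Mstar0.
  exact: MstarS Mpi Mstar1.
Qed.

Definition sem_sym (A : xsym) (w : seq Sigma) (qs : seq 'I_n) : Prop :=
  match A with
  | XT c => w = [:: c] /\ qs = [::]
  | X0 => exists m1 m2 a1 u a2, [/\ I m1 a1, run [:: p0] m1 [::] m2 u qs, P m2 a2
            & w = optw a1 ++ u ++ optw a2]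
  | XV i p j => run [:: p] i [::] j w qs
  end.

Fixpoint sem_form (s : seq xsym) (w : seq Sigma) (qs : seq 'I_n) : Prop :=
  if s is A :: s' then exists w1 w2 q1 q2,
    [/\ w = w1 ++ w2, qs = q1 ++ q2, sem_sym A w1 q1 & sem_form s' w2 q2]
  else w = [::] /\ qs = [::].

Lemma sem_form_cat s1 s2 w qs : sem_form (s1 ++ s2) w qs <->
  exists w1 w2 q1 q2, [/\ w = w1 ++ w2, qs = q1 ++ q2, sem_form s1 w1 q1 & sem_form s2 w2 q2].
Proof.
elim: s1 w qs => [|A s1 IHs] w qs /=.
  split=> [sem2|[_ [w2 [_ [q2 [-> -> [-> ->] sem2]]]]]] //.
  by exists [::], w, [::], qs.
split.
- move=> [w1 [w' [q1 [q' [-> -> semA /IHs [w2 [w3 [q2 [q3 [-> -> sem1 sem2]]]]]]]]]].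
  exists (w1 ++ w2), w3, (q1 ++ q2), q3; rewrite !catA; split=> //.
  by exists w1, w2, q1, q2.
- move=> [_ [w3 [_ [q3 [-> -> [w1 [w2 [q1 [q2 [-> -> semA sem1]]]]] sem2]]]]].
  exists w1, (w2 ++ w3), q1, (q2 ++ q3); rewrite !catA; split=> //.
  by apply/IHs; exists w2, w3, q2, q3.
Qed.

Lemma sem_form_terms u w qs : sem_form (terms u) w qs <-> w = u /\ qs = [::].
Proof.
elim: u w qs => [|c u IHu] w qs //=; split.
- by move=> [_ [w2 [_ [q2 [-> -> [-> ->] /IHu [-> ->]]]]]].
- by move=> [-> ->]; exists [:: c], u, [::], [::]; split=> //; exact/IHu.
Qed.

Lemma sem_chain ms ps j u qs : size ms = size ps ->
  sem_form (chain ms ps j) u qs -> run ps (head j ms) [::] j u qs.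
Proof.
elim: ms ps u qs => [|m ms IHms] [|p ps] //= u qs.
- by move=> _ [-> ->]; exact: run0.
- move=> [size_ms] [w1 [w2 [q1 [q2 [-> -> run1 /(IHms _ _ _ size_ms) run2]]]]].
  exact: run_trans (run_catr ps run1) run2.
Qed.

Lemma lderiv_sem s w tr : lderiv s (terms w) tr -> sem_form s w (firsts tr).
Proof.
move e : (terms w) => s' der; elim: der w e => [{}s|{}s A s1 s2 tr' step _ IHder] w e.
  by rewrite -e; exact/sem_form_terms.
have := IHder w e; case: step => u {}A g beta prodA.
move=> /sem_form_cat [w1 [w2 [q1 [q2 [-> qE /sem_form_terms [-> q1E] /sem_form_cat]]]]].
move=> [wg [wb [qg [qb [-> q2E sem_g sem_b]]]]]; rewrite {}q1E {}q2E in qE.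
apply/sem_form_cat; exists u, (wg ++ wb), [::], (firsts (A :: tr')); split=> //.
  exact/sem_form_terms.
case: A prodA => [c //|/=|i p j /=]; rewrite qE.
- move=> [a1 [m1 [m2 [a2 [I1 [P2 gE]]]]]]; move: sem_g; rewrite gE.
  move=> /sem_form_cat [x1 [x2 [y1 [y2 [-> -> /sem_form_terms [-> ->]]]]]].
  move=> [v [v' [r [r' [-> -> run_v /sem_form_terms [-> ->]]]]]].
  exists (optw a1 ++ v ++ optw a2), wb, r, qb; rewrite /= !cats0 !catA; split=> //.
  by exists m1, m2, a1, v, a2; rewrite -catA.
- move=> [a [ps [ms [size_ms [Mps gE]]]]]; move: sem_g; rewrite gE.
  move=> /sem_form_cat [x1 [u' [y1 [q' [-> -> /sem_form_terms [-> ->] sem_c]]]]].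
  exists (optw a ++ u'), wb, (i :: q'), qb; split=> //.
  apply: runS (sem_chain size_ms sem_c); apply/Mfull_cons; exists ps; by rewrite cats0.
Qed.

Lemma lderiv_catr t s s' tr : lderiv s s' tr -> lderiv (s ++ t) (s' ++ t) tr.
Proof.
elim=> [{}s|{}s A s1 s2 tr' step _ IHder]; first exact: LDeriv0.
apply: LDerivS IHder; case: step => u {}A g beta prodA.
by rewrite -!catA; exact: LStep.
Qed.

Lemma lderiv_catl u s s' tr : lderiv s s' tr -> lderiv (terms u ++ s) (terms u ++ s') tr.
Proof.
elim=> [{}s|{}s A s1 s2 tr' step _ IHder]; first exact: LDeriv0.
apply: LDerivS IHder; case: step => u' {}A g beta prodA.
by have := LStep (u ++ u') beta prodA; rewrite map_cat -!catA.
Qed.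

Lemma lderiv_trans s1 s2 s3 tr1 tr2 :
  lderiv s1 s2 tr1 -> lderiv s2 s3 tr2 -> lderiv s1 s3 (tr1 ++ tr2).
Proof. by elim=> // s A s' s'' tr step _ IHder der2; exact: LDerivS step (IHder der2). Qed.

Lemma lderiv_cat s1 s2 w1 w2 tr1 tr2 :
  lderiv s1 (terms w1) tr1 -> lderiv s2 (terms w2) tr2 ->
  lderiv (s1 ++ s2) (terms (w1 ++ w2)) (tr1 ++ tr2).
Proof.
by move=> der1 der2; rewrite map_cat; exact: lderiv_trans (lderiv_catr _ der1) (lderiv_catl _ der2).
Qed.

Lemma lderiv_prod A g : prodX Mb I P p0 A g -> lderiv [:: A] g [:: A].
Proof.
move=> prodA; have := LStep [::] [::] prodA; rewrite /= cats0 => step.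
exact: LDerivS step (LDeriv0 _ _ _ _ _).
Qed.

(* Induction on the number of transitions: the first one replaces p by some
   ps0, and the rest of the run pops ps0 symbol by symbol. *)
Lemma run_chain_lderiv ps i j u qs : run ps i [::] j u qs ->
  exists ms, [/\ size ms = size ps, head j ms = i &
    exists tr, lderiv (chain ms ps j) (terms u) tr /\ firsts tr = qs].
Proof.
have [N lt_qs] : exists N, size qs < N by exists (size qs).+1.
elim: N ps i j u qs lt_qs => // N IHN ps.
elim: ps => [|p ps IHps] i j u qs lt_qs run_ps.
  case/run_nil: run_ps => _ -> -> ->; exists [::]; split=> //.
  by exists [::]; split=> //; exact: LDeriv0.
have [k [w1 [w2 [q1 [q2 [run1 run2 -> qsE]]]]]] := run_split (x := [:: p]) run_ps.
have [ps0 [k1 [a [w' [q' [Mps0 run' -> q1E]]]]]] := run_cons run1.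
rewrite cats0 in run'; rewrite {}qsE {}q1E /= size_cat in lt_qs *.
have [|ms0 [size_ms0 ms0_head [tr0 [der0 <-]]]] := IHN ps0 k1 k w' q' _ run'; first lia.
have [|ms' [size_ms' ms'_head [tr2 [der2 <-]]]] := IHps k j w2 q2 _ run2; first lia.
exists (i :: ms'); split; [by rewrite /= size_ms' | by [] |].
exists ((XV Sigma i p k :: tr0) ++ tr2); split; last by rewrite /firsts pmap_cat.
rewrite /= ms'_head -cat1s; apply: (lderiv_cat (tr1 := XV Sigma i p k :: tr0)) => //.
apply: (lderiv_trans (tr1 := [:: XV Sigma i p k])).
  by apply: lderiv_prod; exists a, ps0, ms0; rewrite ms0_head.
by rewrite map_cat; exact: lderiv_catl.
Qed.

Lemma LG_finE w : LG_fin Mb I P p0 w <-> sigma_x0 Mb I P p0 w.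
Proof.
split.
- move=> [tr /lderiv_sem /= [w1 [w2 [q1 [q2 [-> _ sem_x0 [-> _]]]]]]].
  move: sem_x0 => [m1 [m2 [a1 [u [a2 [I1 run_u P2 ->]]]]]].
  exists m1, m2, a1, u, a2; rewrite cats0; split=> //; split=> //.
  by apply/Mstar_run; exists q1.
- move=> [m1 [m2 [a1 [u [a2 [I1 [/Mstar_run [qs run_u] [P2 ->]]]]]]]].
  have [[|m [|? ?]] [//= _ mE [tr [der _]]]] := run_chain_lderiv run_u.
  exists ([:: X0 Sigma Gamma n] ++ [::] ++ tr ++ [::]).
  apply: lderiv_trans; first by apply: lderiv_prod; exists a1, m1, m2, a2.
  rewrite -mE; apply: lderiv_cat; first exact: LDeriv0.
  by apply: (lderiv_cat (s1 := [:: XV Sigma m p0 m2])) => //; exact: LDeriv0.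
Qed.

Lemma in_PlS (js : nat -> 'I_n) : in_Pl l (fun t => js t.+1) <-> in_Pl l js.
Proof.
split=> js_Pl N.
  by have [t [le_Nt lt_l]] := js_Pl N; exists t.+1; split=> //; exact: leqW.
by have [[|t] [le_Nt lt_l]] := js_Pl N.+1; last by exists t.
Qed.

Lemma in_Pl_flat x0 g (js : nat -> 'I_n) : (forall m, 0 < size (g m)) ->
  is_inf_concat g js -> in_Pl l (flat x0 g) <-> in_Pl l js.
Proof.
move=> g_gt0 g_js; have flatE := is_inf_concat_unique (flat_is_inf_concat x0 g_gt0) g_js.
by rewrite (functional_extensionality _ _ flatE).
Qed.

Lemma prodZ_run ip alpha iq w tr : prodZ Mb ip alpha iq -> lderiv alpha (terms w) tr ->
  exists ext, forall rest,
    run (ip.2 :: rest) ip.1 (iq.2 :: ext ++ rest) iq.1 w (ip.1 :: firsts tr).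
Proof.
move=> [a [ps1 [ps2 [ms1 [size_ms1 [Mps ->]]]]]] /lderiv_sem.
move=> /sem_form_cat [x1 [x2 [y1 [y2 [-> -> /sem_form_terms [-> ->] sem_c]]]]].
exists ps2 => rest; apply: (runS (pi1 := ps1 ++ iq.2 :: ps2 ++ rest) (k := head iq.1 ms1)).
  by apply/Mfull_cons; exists (ps1 ++ iq.2 :: ps2); rewrite -catA.
exact: run_catr (sem_chain size_ms1 sem_c).
Qed.

Definition moves (x : (seq Gamma * 'I_n) * option Sigma) (c : seq Gamma * 'I_n) : Prop :=
  Mfull x.1.1 c.1 x.1.2 c.2 x.2.

Lemma run_linked pi i pi' j w qs : run pi i pi' j w qs ->
  exists st, [/\ linked moves fst st (pi', j), head (pi', j) (map fst st) = (pi, i),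
    map (fun x => x.1.2) st = qs & flatten (map (fun x => optw x.2) st) = w].
Proof.
elim=> [pi0 i0|pi0 i0 pi1 k pi'0 j0 a w0 qs0 Mpi _ [st [st_linked st_head <- <-]]].
  by exists [::].
by exists (((pi0, i0), a) :: st); split=> //=; rewrite st_head.
Qed.

Lemma glue_runs (pi : nat -> seq Gamma) (i : nat -> 'I_n) (W : nat -> seq Sigma)
    (Q : nat -> seq 'I_n) :
  (forall m, run (pi m) (i m) (pi m.+1) (i m.+1) (W m) (Q m)) ->
  (forall m, 0 < size (Q m)) ->
  exists pis js as_, [/\ pis 0 = pi 0, js 0 = i 0,
    forall t, Mfull (pis t) (pis t.+1) (js t) (js t.+1) (as_ t),
    is_inf_concat Q js &
    forall w, is_inf_concat W w -> is_inf_concat (fun t => optw (as_ t)) w].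
Proof.
move=> run_m Q_gt0; have [st st_spec] := choice _ (fun m => run_linked (run_m m)).
have st_gt0 m : 0 < size (st m).
  by have [_ _ Q_E _] := st_spec m; rewrite -(size_map (fun x => x.1.2)) Q_E.
have st_head m : (nth (pi 0, i 0, None) (st m) 0).1 = (pi m, i m).
  by have [_ + _ _] := st_spec m; case: (st m) (st_gt0 m).
pose s := flat (pi 0, i 0, None) st.
have st_s : is_inf_concat st s := flat_is_inf_concat _ st_gt0.
have s0 : (s 0).1 = (pi 0, i 0).
  rewrite (is_inf_concat_nth st_s (_ : 0 < size (pcat st 1))) /=; last by rewrite cats0.
  by rewrite cats0 (set_nth_default (pi 0, i 0, None)) ?st_head.
exists (fun t => (s t).1.1), (fun t => (s t).1.2), (fun t => (s t).2); split.
- by rewrite s0.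
- by rewrite s0.
- apply: (flat_linked (R := moves) (f := fst) (x0 := (pi 0, i 0, None)) st_gt0 _ st_s) => m.
  by rewrite st_head; have [] := st_spec m.
- have -> : Q = fun m => map (fun x => x.1.2) (st m).
    by apply: functional_extensionality => m; have [] := st_spec m.
  exact: is_inf_concat_map.
- move=> w; have -> : W = fun m => flatten (map (fun x => optw x.2) (st m)).
    by apply: functional_extensionality => m; have [] := st_spec m.
  exact: is_inf_concat_flatten.
Qed.

(* The m-th Z-production leaves [ext m] below its last variable, and this part
   of the pushdown is never popped afterwards; so the runs of the single steps
   compose on top of the pushdown [stack m]. *)
Lemma LG_omega_sound w : LG_omega Mb I P p0 l w -> tau_z0 Mb I p0 l w.
Proof.
move=> [iq [alpha [W [tr [[a0 [I0 [iq0 alpha0]]] [prodZ_m [der_m [W_w Pl]]]]]]]].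
have [ext run_m] := choice _ (fun m => prodZ_run (prodZ_m m) (der_m m.+1)).
pose stack m := flatten (rev (mkseq ext m)).
have stackS m : stack m.+1 = ext m ++ stack m by rewrite /stack mkseqS rev_rcons.
have [||pis [js [as_ [pis0 js0 Mrun Q_js W_as]]]] :=
  @glue_runs (fun m => (iq m).2 :: stack m) (fun m => (iq m).1) (fun m => W m.+1)
    (fun m => (iq m).1 :: firsts (tr m.+1)).
- by move=> m; rewrite stackS; exact: run_m.
- by [].
have W0 : W 0 = optw a0.
  by move: (lderiv_sem (der_m 0)); rewrite alpha0 => /sem_form_terms[].
exists (iq 0).1, a0, (fun k => w (size (W 0) + k)); split=> //; split.
- exists pis, js, as_; split; first by rewrite pis0 iq0.
  split=> //; split=> //; split; last exact/W_as/is_inf_concat_behead.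
  have gram_js := is_inf_concat_heads (F := fun m => firsts (tr m)) Q_js.
  apply/in_PlS/(in_Pl_flat (iq 0).1 _ gram_js); last exact: Pl.
  by case=> // m; rewrite size_cat addn1.
- by have := is_inf_concat_prependE W_w; rewrite {1}W0.
Qed.

Section InfiniteRun.
Variables (pis : nat -> seq Gamma) (js : nat -> 'I_n) (as_ : nat -> option Sigma).
Hypothesis run_pis : forall t, Mfull (pis t) (pis t.+1) (js t) (js t.+1) (as_ t).

Local Notation word a d := (flatten (map (fun t => optw (as_ t)) (iota a d))).

Lemma size_pis_gt0 t : 0 < size (pis t).
Proof. by have := run_pis t; case: (pis t) => // /Mfull_nil. Qed.

Lemma run_segment d a x y : pis a = x ++ y ->
  (forall s, a <= s < a + d -> size y < size (pis s)) ->
  exists z, pis (a + d) = z ++ y /\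
    run x (js a) z (js (a + d)) (word a d) (map js (iota a d)).
Proof.
elim: d a x => [|d IHd] a x pis_a above_y.
  by exists x; rewrite addn0; split=> //; exact: run0.
have := above_y a; rewrite leqnn addnS ltnS leq_addr pis_a size_cat => /(_ isT).
case: x pis_a => [|p x] pis_a lt_y; first by rewrite ltnn in lt_y.
move: (run_pis a); rewrite pis_a => /Mfull_cons [ps [pis_a1 Mps]].
rewrite catA in pis_a1; have [|z [pis_d run_d]] := IHd a.+1 (ps ++ x) pis_a1.
  by move=> s ?; apply: above_y; lia.
exists z; rewrite -addSn; split=> //=.
by apply: runS run_d; apply/Mfull_cons; exists ps.
Qed.

(* Between consecutive cuts t < t' the pushdown never drops below height
   [size (pis t')], so the transition at t replaces the top symbol by
   ps1 ++ q :: ps2, where q is on top at t' and ps1 is popped before t'; this is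
   a Z-production followed by a derivation of the chain for ps1. *)
Lemma segment_prodZ t t' :
  [/\ t < t', size (pis t) <= size (pis t') &
    forall s, t < s < t' -> size (pis t') < size (pis s)] ->
  exists alpha tr, [/\ prodZ Mb (js t, head p0 (pis t)) alpha (js t', head p0 (pis t')),
    lderiv alpha (terms (word t (t' - t))) tr & firsts tr = map js (iota t.+1 (t' - t.+1))].
Proof.
move=> [lt_tt' le_h above_t'].
case pis_t : (pis t) (size_pis_gt0 t) le_h => [//|p rest] _ le_h.
move: (run_pis t); rewrite pis_t => /Mfull_cons [ps [pis_t1 Mps]].
have le_t1 : size (pis t') <= size (pis t.+1).
  case: (ltngtP t.+1 t') => [lt_t1|lt_t't1|->//]; last lia.
  by apply: ltnW; apply: above_t'; rewrite ltnSn.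
have [|ps1 [q [ps2 [psE size_ps2]]]] := @split_suffix _ ps (size (pis t') - size rest).
  by move: le_h le_t1; rewrite pis_t1 size_cat /=; lia.
have size_top : size (q :: ps2 ++ rest) = size (pis t').
  by move: le_h; rewrite /= size_cat size_ps2; lia.
have [||z [pis_t' run_ps1]] := @run_segment (t' - t.+1) t.+1 ps1 (q :: ps2 ++ rest).
- by rewrite pis_t1 psE -catA.
- by move=> s lt_s; rewrite size_top; apply: above_t'; lia.
rewrite subnKC // in pis_t' run_ps1.
have z0 : z = [::].
  by case: z pis_t' {run_ps1} => // ? ? /(congr1 size); rewrite size_cat size_top /=; lia.
subst z; have [ms1 [size_ms1 ms1_head [tr [der <-]]]] := run_chain_lderiv run_ps1.
exists (topt Gamma n (as_ t) ++ chain ms1 ps1 (js t')), tr; split=> //.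
- exists (as_ t), ps1, ps2, ms1; split=> //; split; last by [].
  by rewrite pis_t' /= ms1_head -psE.
- rewrite (_ : t' - t = (t' - t.+1).+1); last lia.
  by rewrite -[tr]cat0s; apply: lderiv_cat => //; exact: LDeriv0.
Qed.

End InfiniteRun.

Lemma LG_omega_complete w : tau_z0 Mb I p0 l w -> LG_omega Mb I P p0 l w.
Proof.
move=> [m0 [a0 [w' [I0 [[pis [js [as_ [pis0 [js0 [run_pis [Pl w'E]]]]]]] ->]]]]].
have stable0 : stable (fun t => size (pis t)) 0.
  by move=> s _; rewrite pis0 (size_pis_gt0 run_pis).
have [T [T0 T_spec]] := stable_cuts stable0.
have [alpha alphaP] := choice _ (fun m => segment_prodZ run_pis (T_spec m)).
have [tr trP] := choice _ alphaP.
pose W m := flatten (map (fun t => optw (as_ t)) (iota (T m) (T m.+1 - T m))).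
exists (fun m => (js (T m), head p0 (pis (T m)))).
exists (fun m => if m is m'.+1 then alpha m' else topt Gamma n a0).
exists (fun m => if m is m'.+1 then W m' else optw a0).
exists (fun m => if m is m'.+1 then tr m' else [::]).
split; [|split; [|split; [|split]]].
- by exists a0; rewrite T0 js0 pis0.
- by move=> m; have [] := trP m.
- by case=> [|m]; [exact: LDeriv0 | have [] := trP m].
- by apply/is_inf_concat_cons/is_inf_concat_group => // m; have [] := T_spec m.
- have Q_js : is_inf_concat (fun m => js (T m) :: firsts (tr m)) js.
    rewrite (_ : (fun m => _) =
               fun m => flatten (map (fun t => [:: js t]) (iota (T m) (T m.+1 - T m)))).
      by apply/is_inf_concat_group/is_inf_concat_seq1 => // m; have [] := T_spec m.
    apply: functional_extensionality => m; have [_ _ ->] := trP m.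
    have [lt_T _ _] := T_spec m; rewrite flatten_map1.
    by rewrite (_ : T m.+1 - T m = (T m.+1 - (T m).+1).+1) //; lia.
  have := is_inf_concat_heads (F := fun m => firsts (if m is m'.+1 then tr m' else [::])) Q_js.
  move=> gram_js; apply/(in_Pl_flat _ _ gram_js); last exact/in_PlS.
  by case=> // m; rewrite size_cat addn1.
Qed.

End Pushdown.

Theorem theorem14 (Sigma Gamma : finType) (n : nat)
  (Mb : Gamma -> seq Gamma -> 'I_n -> 'I_n -> option Sigma -> bool)
  (I P : 'I_n -> option Sigma -> bool) (p0 : Gamma) (l : nat) :
  pd_finite Mb -> l <= n ->
  (forall w : seq Sigma, LG_fin Mb I P p0 w <-> sigma_x0 Mb I P p0 w) /\
  (forall w : nat -> Sigma, LG_omega Mb I P p0 l w <-> tau_z0 Mb I p0 l w).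
Proof.
move=> _ _; split=> w; first exact: LG_finE.
by split; [exact: LG_omega_sound | exact: LG_omega_complete].
Qed.
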